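(* Let $P\in\mathbb{Q}_{\ge0}^{N\times N}$ be the transition matrix of a reversible and ergodic Markov chain on $V$ with stationary distribution $\pi$ and mixing rate $t^*$. For the rotor-router model on a multidigraph for $P$, with any initial configuration, $$\left|\chi^{(T)}_w-\mu^{(T)}_w\right|\le\frac{3\pi_w}{\pi_{\min}}\,t^*\,\bar\Delta$$ for all $w\in V$ and $T\ge0$.
   Context: Let $V=\{1,\dots,N\}$ and let $P\in\mathbb{Q}_{\ge 0}^{N\times N}$ be an ergodic (irreducible, aperiodic) stochastic matrix with stationary distribution $\pi$; $\pi_{\min}=\min_v\pi_v$; reversible means $\pi_uP_{u,v}=\pi_vP_{v,u}$ for all $u,v$. For $v\in V$ let $\mathcal N(v)=\{u: P_{v,u}>0\}$. Total variation distance $d_{TV}(\xi,\zeta)=\frac12\|\xi-\zeta\|_1$; mixing time $\tau(\varepsilon)=\max_{v}\min\{t\ge0: d_{TV}(P^t_{v,\cdot},\pi)\le\varepsilon\}$; mixing rate $t^*=\tau(1/4)$. For each $v$ let $\bar\delta(v)$ be a positive integer with $\bar\delta(v)P_{v,u}\in\mathbb{Z}$ for all $u$, and $\bar\Delta=\max_v\bar\delta(v)$. The rotor router: $\sigma_v(0),\dots,\sigma_v(\bar\delta(v)-1)\in\mathcal N(v)$ is any sequence in which each $u\in\mathcal N(v)$ occurs exactly $\bar\delta(v)P_{v,u}$ times, extended by $\sigma_v(i)=\sigma_v(i\bmod\bar\delta(v))$. Write $I_{v,u}[z,z')=|\{j\in\{z,\dots,z'-1\}:\sigma_v(j)=u\}|$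 (zero if $z'\le z$). Given $\chi^{(0)}\in\mathbb{Z}_{\ge0}^N$, set $Z^{(t)}_{v,u}=I_{v,u}\big[\sum_{s=0}^{t-1}\chi^{(s)}_v,\sum_{s=0}^{t}\chi^{(s)}_v\big)$, $\chi^{(t+1)}_u=\sum_vZ^{(t)}_{v,u}$, $\mu^{(0)}=\chi^{(0)}$, $\mu^{(t)}=\mu^{(0)}P^t$. *)

From HB Require Import structures.
From mathcomp Require Import all_boot all_order all_algebra.
Set Implicit Arguments. Unset Strict Implicit. Unset Printing Implicit Defensive.
Import Order.TTheory GRing.Theory Num.Theory.
Local Open Scope ring_scope.

Section Defs.
Variable N : nat.
Implicit Types (P : 'M[rat]_N) (pi : 'I_N -> rat).

Definition stochastic P : Prop :=
  (forall u v, 0 <= P u v) /\ (forall u, \sum_v P u v = 1).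

Definition irreducible P : Prop :=
  forall u v, exists t : nat, 0 < (P ^+ t) u v.

(* aperiodic: for every state v, gcd{t >= 1 : P^t_{v,v} > 0} = 1,
   i.e. the only common divisor of all return times is 1 *)
Definition aperiodic P : Prop :=
  forall v (d : nat), (forall t : nat, (0 < t)%N -> 0 < (P ^+ t) v v -> (d %| t)%N) ->
    d = 1%N.

Definition ergodic P : Prop := irreducible P /\ aperiodic P.

Definition stationary P pi : Prop :=
  (forall v, 0 <= pi v) /\ \sum_v pi v = 1 /\
  (forall w, \sum_v pi v * P v w = pi w).

Definition reversible P pi : Prop :=
  forall u v, pi u * P u v = pi v * P v u.

(* pi_min = min_v pi_v (pi is a distribution, so all pi_v <= 1 and
   taking 1 as the neutral element does not change the minimum when N >= 1) *)
Definition pi_min pi : rat := \big[Num.min/1]_v pi v.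

Definition dTV (xi zeta : 'I_N -> rat) : rat :=
  2^-1 * \sum_v `|xi v - zeta v|.

Definition is_local_mixing_time P pi (eps : rat) (v : 'I_N) (t : nat) : Prop :=
  dTV (fun u => (P ^+ t) v u) pi <= eps /\
  (forall s : nat, (s < t)%N -> eps < dTV (fun u => (P ^+ s) v u) pi).

Definition is_mixing_time P pi (eps : rat) (tau : nat) : Prop :=
  (exists v, is_local_mixing_time P pi eps v tau) /\
  (forall v t, is_local_mixing_time P pi eps v t -> (t <= tau)%N).

Definition is_mixing_rate P pi (tstar : nat) : Prop :=
  is_mixing_time P pi (4%:R)^-1 tstar.

Definition valid_delta P (delta : 'I_N -> nat) : Prop :=
  forall v, (0 < delta v)%N /\ forall u, exists k : nat, (delta v)%:R * P v u = k%:R.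

Definition Delta_bar (delta : 'I_N -> nat) : nat := \max_v delta v.

Definition valid_rotor P (delta : 'I_N -> nat) (sigma : 'I_N -> nat -> 'I_N) : Prop :=
  forall v,
    (forall u, (count (fun i => sigma v i == u) (iota 0 (delta v)))%:R
                 = (delta v)%:R * P v u) /\
    (forall i, sigma v i = sigma v (i %% delta v)%N).

Definition Icount (sigma : 'I_N -> nat -> 'I_N) (v u : 'I_N) (z z' : nat) : nat :=
  count (fun j => sigma v j == u) (iota z (z' - z)).

(* history [:: chi^(0); ...; chi^(t)] of the rotor-router process *)
Fixpoint rr_hist (sigma : 'I_N -> nat -> 'I_N) (chi0 : 'I_N -> nat) (t : nat)
  : seq ('I_N -> nat) :=
  match t with
  | 0 => [:: chi0]
  | t'.+1 =>
      let h := rr_hist sigma chi0 t' in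
      rcons h (fun u => (\sum_v Icount sigma v u
                           (\sum_(s < t') nth (fun _ => 0%N) h s v)
                           (\sum_(s < t'.+1) nth (fun _ => 0%N) h s v))%N)
  end.

Definition rr_chi sigma chi0 (t : nat) : 'I_N -> nat :=
  nth (fun _ => 0%N) (rr_hist sigma chi0 t) t.

Definition rr_mu P (chi0 : 'I_N -> nat) (t : nat) (w : 'I_N) : rat :=
  \sum_v (chi0 v)%:R * (P ^+ t) v w.

End Defs.

(* Let e_t be the rounding error of step t, i.e. the difference between the
   number of tokens the rotors send from v to u and its expectation
   chi^(t)_v P_{v,u}.  Telescoping sum_v chi^(t)_v (P^(T-t))_{v,w} over t
   writes chi^(T)_w - mu^(T)_w as sum_{t<T} sum_{v,u} e_t(v,u) ((P^(T-t-1))_{u,w}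
   - pi_w), where pi_w may be inserted because every row of e_t sums to zero.
   Three facts bound this sum:
   - rotor fairness: |e_t(v,u)| <= Delta P_{v,u} (a rotor sequence is
     periodic and every period contains exactly delta_v P_{v,u} arrows to u);
   - reversibility: sum_v P_{v,u} <= pi_u / pi_min, and the pi-weighted
     column distance at w equals pi_w times twice the TV distance from w;
   - mixing: the TV distances from w are nonincreasing, at most 1/4 after t*
     and halved every t* steps, hence sum to at most 3 t*/2 over all times.
   The last point needs that every state does mix, which follows from
   ergodicity through a Doeblin minorisation, itself obtained from the fact
   that aperiodic return times contain all large integers. *)
From HB Require Import structures.
From mathcomp Require Import all_boot all_order all_algebra.
From mathcomp Require Import zify ring lra.
From Stdlib Require Import Classical.
Import Order.TTheory GRing.Theory Num.Theory.
Local Open Scope ring_scope.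
Set Implicit Arguments. Unset Strict Implicit. Unset Printing Implicit Defensive.

Section MatrixPowers.
Variables (N : nat) (P : 'M[rat]_N).

Lemma pow_entry0 u v : (P ^+ 0) u v = (u == v)%:R.
Proof. by rewrite expr0 mxE. Qed.

Lemma pow_entryD a b u v : (P ^+ (a + b)) u v = \sum_y (P ^+ a) u y * (P ^+ b) y v.
Proof. by rewrite exprD -mulmxE mxE. Qed.

Lemma pow_entryS t u v : (P ^+ t.+1) u v = \sum_y P u y * (P ^+ t) y v.
Proof. by rewrite exprS -mulmxE mxE. Qed.

Lemma pow_entrySr t u v : (P ^+ t.+1) u v = \sum_y (P ^+ t) u y * P y v.
Proof. by rewrite exprSr -mulmxE mxE. Qed.

Hypothesis HP : stochastic P.

Lemma pow_entry_ge0 t u v : 0 <= (P ^+ t) u v.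
Proof.
elim: t u v => [|t IH] u v; first by rewrite pow_entry0 ler0n.
by rewrite pow_entryS; apply: sumr_ge0 => y _; apply: mulr_ge0 => //; exact: HP.1.
Qed.

Lemma pow_row_sum1 t u : \sum_v (P ^+ t) u v = 1.
Proof.
elim: t u => [|t IH] u.
  rewrite (bigD1 u) //= pow_entry0 eqxx big1 ?addr0 // => v /negbTE.
  by rewrite eq_sym pow_entry0 => ->.
under eq_bigr do rewrite pow_entryS.
rewrite exchange_big /=.
under eq_bigr do rewrite -mulr_sumr IH mulr1.
exact: HP.2.
Qed.

Lemma pow_entry_le1 t u v : (P ^+ t) u v <= 1.
Proof.
rewrite -(pow_row_sum1 t u) (bigD1 v) //= lerDl.
by apply: sumr_ge0 => *; exact: pow_entry_ge0.
Qed.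

Lemma pow_entry_via a b u y v : (P ^+ a) u y * (P ^+ b) y v <= (P ^+ (a + b)) u v.
Proof.
rewrite pow_entryD (bigD1 y) //= lerDl.
by apply: sumr_ge0 => *; apply: mulr_ge0; exact: pow_entry_ge0.
Qed.

Variable pi : 'I_N -> rat.
Hypothesis Hpi : stationary P pi.

Lemma stationary_pow t w : \sum_v pi v * (P ^+ t) v w = pi w.
Proof.
elim: t w => [|t IH] w.
  rewrite (bigD1 w) //= pow_entry0 eqxx mulr1 big1 ?addr0 // => v /negbTE.
  by rewrite pow_entry0 => ->; rewrite mulr0.
under eq_bigr do rewrite pow_entrySr mulr_sumr.
rewrite exchange_big /= -[RHS]Hpi.2.2; apply: eq_bigr => y _.
by rewrite -(IH y) mulr_suml; apply: eq_bigr => v _; rewrite mulrA.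
Qed.

Lemma reversible_pow : reversible P pi ->
  forall t u v, pi u * (P ^+ t) u v = pi v * (P ^+ t) v u.
Proof.
move=> Hrev; elim=> [|t IH] u v.
  by rewrite !pow_entry0 eq_sym; case: eqP => [->|]; rewrite ?mulr0.
rewrite pow_entryS pow_entrySr !mulr_sumr; apply: eq_bigr => y _.
by rewrite mulrA Hrev -mulrA mulrCA IH; ring.
Qed.

Lemma l1_contraction (mu nu : 'I_N -> rat) (Q : 'I_N -> 'I_N -> rat) c :
  \sum_u mu u = 0 -> (forall u, \sum_y `|Q u y - nu y| <= c) ->
  \sum_y `|\sum_u mu u * Q u y| <= c * \sum_u `|mu u|.
Proof.
move=> mu0 HQ.
have centred y : \sum_u mu u * Q u y = \sum_u mu u * (Q u y - nu y).
  under [RHS]eq_bigr do rewrite mulrBr.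
  by rewrite sumrB -mulr_suml mu0 mul0r subr0.
under eq_bigr do rewrite centred.
apply: (le_trans (ler_sum _ (fun y _ => ler_norm_sum _ _ _))).
rewrite exchange_big /= mulr_sumr; apply: ler_sum => u _.
under eq_bigr do rewrite normrM.
by rewrite -mulr_sumr mulrC; apply: ler_wpM2r => //; exact: HQ.
Qed.

Definition dist_pi v t : rat := \sum_y `|(P ^+ t) v y - pi y|.

Lemma dTV_dist_pi v t : dTV (fun u => (P ^+ t) v u) pi = 2^-1 * dist_pi v t.
Proof. by []. Qed.

Lemma dist_pi_ge0 v t : 0 <= dist_pi v t.
Proof. exact: sumr_ge0. Qed.

Lemma dist_pi_le2 v t : dist_pi v t <= 2.
Proof.
apply: (@le_trans _ _ (\sum_y ((P ^+ t) v y + pi y))).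
  apply: ler_sum => y _; apply: (le_trans (ler_normB _ _)).
  by rewrite !ger0_norm //; [exact: Hpi.1 | exact: pow_entry_ge0].
by rewrite big_split /= pow_row_sum1 Hpi.2.1.
Qed.

Lemma dist_pi_step v t m (nu : 'I_N -> rat) c :
  (forall u, \sum_y `|(P ^+ m) u y - nu y| <= c) -> dist_pi v (t + m) <= c * dist_pi v t.
Proof.
move=> Hc.
have split_diff y : (P ^+ (t + m)) v y - pi y
    = \sum_u ((P ^+ t) v u - pi u) * (P ^+ m) u y.
  under [RHS]eq_bigr do rewrite mulrBl.
  by rewrite sumrB stationary_pow pow_entryD.
rewrite /dist_pi; under eq_bigr do rewrite split_diff.
apply: (l1_contraction (Q := fun u y => (P ^+ m) u y)) Hc.
by rewrite sumrB pow_row_sum1 Hpi.2.1 subrr.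
Qed.

(* P is a contraction with coefficient 1, so the distance never increases. *)
Lemma dist_pi_nonincr v t k : dist_pi v (t + k) <= dist_pi v t.
Proof.
elim: k => [|k IH]; first by rewrite addn0.
have step : dist_pi v (t + k).+1 <= dist_pi v (t + k).
  rewrite -addn1 -[leRHS]mul1r; apply: (@dist_pi_step v (t + k) 1 (fun _ => 0)) => u.
  under eq_bigr do rewrite subr0 ger0_norm ?pow_entry_ge0 //.
  by rewrite pow_row_sum1.
by rewrite addnS; exact: le_trans step IH.
Qed.

Lemma dist_pi_doeblin x m eps v k : 0 < eps ->
  (forall u, eps <= (P ^+ m) u x) -> dist_pi v (k * m) <= (1 - eps) ^+ k * 2.
Proof.
move=> eps0 Heps.
have eps1 : eps <= 1 := le_trans (Heps x) (pow_entry_le1 _ _ _).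
have coeff u : \sum_y `|(P ^+ m) u y - (if y == x then eps else 0)| <= 1 - eps.
  rewrite (bigD1 x) //= eqxx ger0_norm ?subr_ge0 //.
  under eq_bigr => y /negbTE ny do rewrite ny subr0 ger0_norm ?pow_entry_ge0 //.
  by have := pow_row_sum1 m u; rewrite (bigD1 x) //= => <-; rewrite addrAC.
elim: k => [|k IH]; first by rewrite mul0n expr0 mul1r dist_pi_le2.
rewrite mulSn addnC; apply: le_trans (dist_pi_step _ _ coeff) _.
by rewrite exprS -mulrA; apply: ler_wpM2l => //; rewrite subr_ge0.
Qed.

End MatrixPowers.

Section AdditiveSets.
Variable S : pred nat.
Hypothesis S_add : forall a b, S a -> S b -> S (a + b)%N.

Lemma add_closed_mul a k : S a -> S (k.+1 * a)%N.
Proof.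
move=> Sa; elim: k => [|k IH]; first by rewrite mul1n.
by rewrite mulSn; exact: S_add.
Qed.

Hypothesis S_pos : forall a, S a -> (0 < a)%N.
Hypothesis S_gcd1 : forall d, (forall t, S t -> (d %| t)%N) -> d = 1%N.

(* An additively closed set of positive integers with gcd 1 contains two
   consecutive integers: the gap d between two elements p, p + d can be
   decreased as long as d > 1, using an element t' not divisible by d. *)
Lemma add_closed_consecutive : exists p, S p /\ S (p + 1)%N.
Proof.
have [t St] : exists t, S t.
  apply: NNPP => noS.
  by have := S_gcd1 (d := 0) (fun t St => False_ind _ (noS (ex_intro _ t St))).
suff gap : forall d, (0 < d)%N -> (exists p, S p /\ S (p + d)%N) ->
    exists p, S p /\ S (p + 1)%N.
  apply: (gap t (S_pos St)); exists t; split => //.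
  by rewrite -{2}(mul1n t) -mulSn; exact: add_closed_mul.
elim/ltn_ind => d IH d0 [p [Sp Spd]].
have [d1|dn1] := eqVneq d 1%N; first by exists p; rewrite -d1.
have [t' [St' ndt]] : exists t', S t' /\ ~~ (d %| t')%N.
  apply: NNPP => nE; move: dn1; rewrite (S_gcd1 (d := d)) // => t' St'.
  by apply: NNPP => ndv; apply: nE; exists t'; split => //; apply/negP.
have r0 : (0 < t' %% d)%N by move: ndt; rewrite /dvdn lt0n.
have rd : (t' %% d < d)%N by rewrite ltn_mod.
have Ediv := divn_eq t' d.
apply: (IH (d - t' %% d)%N); [lia | lia |].
exists ((t' %/ d).+1 * p + t')%N; split; first by apply: S_add => //; exact: add_closed_mul.
have -> : ((t' %/ d).+1 * p + t' + (d - t' %% d) = (t' %/ d).+1 * (p + d))%N.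
  by rewrite mulnDr; lia.
exact: add_closed_mul.
Qed.

(* With p and p + 1 in S, every n >= p^2 is a combination i p + j (p + 1). *)
Lemma add_closed_from_consecutive p : S p -> S (p + 1)%N ->
  forall n, (p * p <= n)%N -> S n.
Proof.
move=> Sp Sp1 n Hn.
have p0 : (0 < p)%N := S_pos Sp.
have comb i j : (0 < i + j)%N -> S (i * p + j * (p + 1))%N.
  elim: i j => [|i IH] j ij.
    by rewrite mul0n add0n; case: j ij => // j _; exact: add_closed_mul.
  have [ij0|ijpos] := posnP (i + j)%N.
    have [-> ->] : i = 0%N /\ j = 0%N by lia.
    by rewrite mul1n mul0n addn0.
  by rewrite mulSn -addnA; apply: S_add => //; exact: IH.
have Ed := divn_eq n p; have rp : (n %% p < p)%N by rewrite ltn_mod.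
have qp : (p <= n %/ p)%N.
  rewrite leqNgt; apply/negP => H.
  have : (n %/ p * p <= (p - 1) * p)%N by apply: leq_mul; lia.
  nia.
have -> : n = ((n %/ p - n %% p) * p + n %% p * (p + 1))%N.
  have rq : (n %% p * p <= n %/ p * p)%N by apply: leq_mul; lia.
  by rewrite {1}Ed mulnBl mulnDr muln1; lia.
by apply: comb; lia.
Qed.

Lemma add_closed_eventually : exists m0, forall n, (m0 <= n)%N -> S n.
Proof.
have [p [Sp Sp1]] := add_closed_consecutive.
by exists (p * p)%N; exact: add_closed_from_consecutive.
Qed.

End AdditiveSets.

Section Ergodic.
Variables (N : nat) (P : 'M[rat]_N).
Hypothesis HP : stochastic P.

(* Aperiodicity: the return times to x form an additively closed set of gcd 1,
   so every sufficiently long return has positive probability. *)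
Lemma eventually_positive_return x : aperiodic P ->
  exists m0, forall n, (m0 <= n)%N -> 0 < (P ^+ n) x x.
Proof.
move=> Hap.
pose S t := (0 < t)%N && (0 < (P ^+ t) x x).
have S_add a b : S a -> S b -> S (a + b)%N.
  move=> /andP[a0 Ha] /andP[b0 Hb]; apply/andP; split; first by rewrite addn_gt0 a0.
  by apply: lt_le_trans (pow_entry_via HP a b x x x); exact: mulr_gt0.
have S_pos a : S a -> (0 < a)%N by case/andP.
have S_gcd1 d : (forall t, S t -> (d %| t)%N) -> d = 1%N.
  by move=> Hd; apply: (Hap x d) => t t0 Ht; apply: Hd; apply/andP.
have [m0 Hm0] := add_closed_eventually S_add S_pos S_gcd1.
by exists m0 => n /Hm0 /andP[].
Qed.

Lemma doeblin_minorisation x : ergodic P ->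
  exists m eps, 0 < eps /\ forall u, eps <= (P ^+ m) u x.
Proof.
move=> [Hirr Hap].
have [m0 Hm0] := eventually_positive_return x Hap.
have [r Hr] := fin_all_exists (fun u => Hirr u x).
pose R := (\max_u r u)%N.
have pos u : 0 < (P ^+ (R + m0)) u x.
  have rR : (r u <= R)%N := leq_bigmax u.
  have -> : (R + m0 = r u + (R + m0 - r u))%N by lia.
  apply: lt_le_trans (pow_entry_via HP _ _ u x x).
  by apply: mulr_gt0 => //; apply: Hm0; lia.
exists (R + m0)%N, (\big[Num.min/1]_u (P ^+ (R + m0)) u x); split.
- by apply: (big_ind (fun e => 0 < e)) => // a b a0 b0; rewrite lt_min a0 b0.
- by move=> u; rewrite (bigD1 u) //= ge_min lexx.
Qed.

Lemma bernoulli_bound (e : rat) k : 0 <= e -> e <= 1 -> (1 - e) ^+ k * (1 + k%:R * e) <= 1.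
Proof.
move=> e0 e1; elim: k => [|k IH]; first by rewrite expr0 mul0r addr0 mulr1.
apply: le_trans IH; rewrite exprS -mulrA mulrCA; apply: ler_wpM2l.
  by apply: exprn_ge0; rewrite subr_ge0.
by have := mulr_ge0 (ler0n _ k.+1) (mulr_ge0 e0 e0); rewrite -!natr1; nra.
Qed.

Variable pi : 'I_N -> rat.
Hypothesis Hpi : stationary P pi.

Lemma dist_pi_eventually_small v : ergodic P -> exists t, dist_pi P pi v t <= 2^-1.
Proof.
move=> Herg.
have [m [eps [eps0 Heps]]] := doeblin_minorisation v Herg.
have eps1 : eps <= 1 := le_trans (Heps v) (pow_entry_le1 HP _ _ _).
have [k Hk] : exists k : nat, 3 / eps < k%:R.
  by exists (Num.Def.archi_bound (3 / eps)); apply: archi_boundP; rewrite divr_ge0 ?ltW.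
exists (k * m)%N; apply: le_trans (dist_pi_doeblin HP Hpi v k eps0 Heps) _.
have bern := bernoulli_bound k (ltW eps0) eps1.
have keps3 : 3 < k%:R * eps by rewrite -ltr_pdivrMr.
have decay_ge0 : 0 <= (1 - eps) ^+ k by apply: exprn_ge0; rewrite subr_ge0.
(* (1 - eps)^k (1 + k eps) <= 1 with k eps > 3 gives (1 - eps)^k < 1/4. *)
move: bern keps3 decay_ge0; set X := (1 - eps) ^+ k; set Y := k%:R * eps => bern Y3 X0.
have : 0 <= X * (Y - 3) by apply: mulr_ge0 => //; lra.
nra.
Qed.

Lemma dist_pi_after_mixing tstar : ergodic P -> is_mixing_rate P pi tstar ->
  forall v t, (tstar <= t)%N -> dist_pi P pi v t <= 2^-1.
Proof.
move=> Herg [_ Hmix] v t ts.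
case: (ex_minnP (dist_pi_eventually_small v Herg)) => t0 Ht0 Hmin.
have t0_le : (t0 <= tstar)%N.
  apply: (Hmix v t0); split; first by rewrite dTV_dist_pi; lra.
  move=> s st0; rewrite dTV_dist_pi.
  have : ~~ (dist_pi P pi v s <= 2^-1) by apply/negP => /Hmin; lia.
  by rewrite -ltNge; lra.
have -> : t = (t0 + (t - t0))%N by lia.
exact: le_trans (dist_pi_nonincr HP Hpi _ _ _) Ht0.
Qed.

End Ergodic.

Lemma sum_le_const (f : nat -> rat) T (c : rat) : (forall s, (s < T)%N -> f s <= c) ->
  \sum_(s < T) f s <= T%:R * c.
Proof.
move=> H; apply: le_trans (ler_sum _ (fun (i : 'I_T) _ => H i (ltn_ord i))) _.
by rewrite sumr_const card_ord mulr_natl.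
Qed.

Section HalvingSums.
Variables (f : nat -> rat) (n : nat).
Hypothesis f_ge0 : forall s, 0 <= f s.
Hypothesis f_le2 : forall s, f s <= 2.
Hypothesis f_small : forall s, (n <= s)%N -> f s <= 2^-1.
Hypothesis f_halve : forall s, f (s + n)%N <= 2^-1 * f s.

(* The tail beyond n sums to at most n: blocks of length n sum to at most
   n/2, n/4, ... *)
Lemma halving_tail_sum K : (0 < n)%N -> \sum_(s < K) f (n + s)%N <= n%:R.
Proof.
move=> n_pos; elim/ltn_ind: K => K IH.
have [Kn|nK] := leqP K n.
  apply: le_trans (@sum_le_const (fun s => f (n + s)%N) K (2^-1) _) _.
    by move=> s _; apply: f_small; rewrite leq_addr.
  have Kn_R : (K%:R : rat) <= n%:R by rewrite ler_nat.
  have K_ge0 : (0 : rat) <= K%:R by [].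
  lra.
have -> : K = (n + (K - n))%N by lia.
rewrite big_split_ord /=.
have head : \sum_(i < n) f (n + lshift (K - n) i)%N <= n%:R * 2^-1.
  by apply: (sum_le_const (f := fun i => f (n + i)%N)) => s _; apply: f_small; rewrite leq_addr.
have tail : \sum_(i < K - n) f (n + rshift n i)%N <= 2^-1 * \sum_(i < K - n) f (n + i)%N.
  by rewrite mulr_sumr; apply: ler_sum => i _ /=; rewrite addnC; apply: f_halve.
have rest := IH (K - n)%N ltac:(lia).
have n_ge0 : (0 : rat) <= n%:R by [].
lra.
Qed.

Lemma halving_sum T : \sum_(s < T) f s <= 3%:R * n%:R.
Proof.
have [n0|n_pos] := posnP n.
  rewrite n0 mulr0; apply: sumr_le0 => s _.
  have := f_halve s; rewrite n0 addn0 => halved.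
  by have := f_ge0 s; lra.
apply: (@le_trans _ _ (\sum_(s < n + T) f s)).
  by rewrite addnC big_split_ord /= lerDl; apply: sumr_ge0 => *; exact: f_ge0.
rewrite big_split_ord /=.
have head : \sum_(i < n) f (lshift T i) <= n%:R * 2 by apply: (sum_le_const (f := f)) => s _.
have tail := halving_tail_sum T n_pos.
lra.
Qed.

End HalvingSums.

Lemma sum_dist_pi_le N (P : 'M[rat]_N) pi tstar v T :
  stochastic P -> ergodic P -> stationary P pi -> is_mixing_rate P pi tstar ->
  \sum_(t < T) dist_pi P pi v t <= 3%:R * tstar%:R.
Proof.
move=> HP Herg Hpi Hmix.
have mixed := dist_pi_after_mixing HP Hpi Herg Hmix.
apply: halving_sum => [t|t|t|t]; first exact: dist_pi_ge0.
- exact: dist_pi_le2.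
- exact: mixed.
- by apply: (dist_pi_step HP Hpi) => u; exact: mixed.
Qed.

Section PeriodicCounts.
Variables (p : pred nat) (d : nat).
Hypothesis d_pos : (0 < d)%N.
Hypothesis p_periodic : forall i, p i = p (i %% d)%N.

Lemma count_period_window z : count p (iota z d) = count p (iota 0 d).
Proof.
case: d d_pos p_periodic => // d' _ Hp; elim: z => [|z IH] //; rewrite -IH.
rewrite -[in LHS](addn1 d') iotaD count_cat /= addn0.
have -> : (z.+1 + d')%N = (z + (d' + 1))%N by lia.
by rewrite Hp addn1 modnDr -Hp; lia.
Qed.

Lemma count_periods z q : count p (iota z (q * d)) = (q * count p (iota 0 d))%N.
Proof.
elim: q z => [|q IH] z; first by rewrite !mul0n.
by rewrite mulSn iotaD count_cat IH count_period_window.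
Qed.

End PeriodicCounts.

Lemma count_iota_prefix (p : pred nat) z r d : (r <= d)%N ->
  (count p (iota z r) <= count p (iota z d))%N.
Proof.
move=> rd; have -> : d = (r + (d - r))%N by lia.
by rewrite iotaD count_cat leq_addr.
Qed.

Lemma sum_count_eq N (f : nat -> 'I_N) (s : seq nat) :
  (\sum_u count (fun j => f j == u) s)%N = size s.
Proof.
elim: s => [|x s IH] /=; first by rewrite big1.
rewrite big_split /= IH (bigD1 (f x)) //= eqxx big1 ?addn0 ?add1n // => u /negbTE.
by rewrite eq_sym => ->.
Qed.

Lemma Icount_sum N (sigma : 'I_N -> nat -> 'I_N) v z z' :
  (\sum_u Icount sigma v u z z')%N = (z' - z)%N.
Proof. by rewrite /Icount sum_count_eq size_iota. Qed.

Lemma Icount_deviation N (P : 'M[rat]_N) delta sigma v u z L :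
  stochastic P -> valid_delta P delta -> valid_rotor P delta sigma ->
  `|(Icount sigma v u z (z + L))%:R - L%:R * P v u| <= (delta v)%:R * P v u.
Proof.
move=> HP Hd Hr.
have d0 := (Hd v).1; have [Hc Hper] := Hr v.
set d := delta v in d0 Hc Hper *.
set p := (fun j => sigma v j == u).
have p_per i : p i = p (i %% d)%N by rewrite /p Hper.
rewrite /Icount addKn -/p (divn_eq L d) iotaD count_cat count_periods //.
set q := (L %/ d)%N; set r := (L %% d)%N.
have rd : (r < d)%N by rewrite ltn_mod.
have c1_le := leq_trans (count_iota_prefix p (z + q * d) (ltnW rd))
  (eq_leq (count_period_window d0 p_per (z + q * d))).
have Puv := HP.1 v u.
move: (Hc u); rewrite -/p => Hc0.
set c0 := count p (iota 0 d) in Hc0 c1_le *.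
set c1 := count p (iota (z + q * d) r) in c1_le *.
have c1R : (c1%:R : rat) <= c0%:R by rewrite ler_nat.
have rP_le : r%:R * P v u <= d%:R * P v u by apply: ler_wpM2r => //; rewrite ler_nat ltnW.
have rP_ge0 : 0 <= r%:R * P v u by apply: mulr_ge0.
have -> : (q * c0 + c1)%:R - (q * d + r)%:R * P v u = c1%:R - r%:R * P v u.
  by rewrite !natrD !natrM Hc0; ring.
have c1_ge0 : (0 : rat) <= c1%:R by [].
rewrite ler_norml; apply/andP; split; lra.
Qed.

Section RotorProcess.
Variables (N : nat) (sigma : 'I_N -> nat -> 'I_N) (chi0 : 'I_N -> nat).

Lemma size_rr_hist t : size (rr_hist sigma chi0 t) = t.+1.
Proof. by elim: t => [|t IH] //=; rewrite size_rcons IH. Qed.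

Lemma rr_hist_nth t s : (s <= t)%N ->
  nth (fun _ => 0%N) (rr_hist sigma chi0 t) s = rr_chi sigma chi0 s.
Proof.
elim: t s => [|t IH] s; first by rewrite leqn0 => /eqP ->.
rewrite leq_eqVlt => /orP[/eqP ->|st] //.
by rewrite /= nth_rcons size_rr_hist st; exact: IH.
Qed.

Definition departed t v : nat := (\sum_(s < t) rr_chi sigma chi0 s v)%N.

Lemma departedS t v : departed t.+1 v = (departed t v + rr_chi sigma chi0 t v)%N.
Proof. by rewrite /departed big_ord_recr. Qed.

Lemma rr_chiS t u : rr_chi sigma chi0 t.+1 u =
  (\sum_v Icount sigma v u (departed t v) (departed t.+1 v))%N.
Proof.
rewrite {1}/rr_chi /= nth_rcons size_rr_hist ltnn eqxx /departed.
apply: eq_bigr => v _; congr Icount; apply: eq_bigr => i _; rewrite rr_hist_nth //.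
  by rewrite ltnW.
by rewrite -ltnS.
Qed.

End RotorProcess.

Section StationaryMeasure.
Variables (N : nat) (P : 'M[rat]_N) (pi : 'I_N -> rat).
Hypotheses (HP : stochastic P) (Hpi : stationary P pi).

Lemma stationary_pos : irreducible P -> forall u, 0 < pi u.
Proof.
move=> Hirr u.
have [v0 pi_v0] : exists v0, 0 < pi v0.
  case: (pickP (fun v => 0 < pi v)) => [v0 pos|none]; first by exists v0.
  suff : \sum_v pi v <= 0 by rewrite Hpi.2.1 ler10.
  by apply: sumr_le0 => v _; rewrite leNgt none.
have [t Ht] := Hirr v0 u.
rewrite -(stationary_pow Hpi t u) (bigD1 v0) //=.
apply: (@lt_le_trans _ _ (pi v0 * (P ^+ t) v0 u)); first exact: mulr_gt0.
rewrite lerDl; apply: sumr_ge0 => v _; apply: mulr_ge0; [exact: Hpi.1 | exact: pow_entry_ge0].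
Qed.

Lemma pi_min_le u : pi_min pi <= pi u.
Proof. by rewrite /pi_min (bigD1 u) //= ge_min lexx. Qed.

Lemma pi_min_pos : irreducible P -> 0 < pi_min pi.
Proof.
move=> Hirr; apply: (big_ind (fun e => 0 < e)) => // [a b a0 b0|u _].
  by rewrite lt_min a0 b0.
exact: stationary_pos.
Qed.

Hypothesis Hrev : reversible P pi.

(* By reversibility, P_{v,u} = pi_u P_{u,v} / pi_v, so the column sums of P
   are at most pi_u / pi_min. *)
Lemma column_sum_le u : irreducible P -> \sum_v P v u <= pi u / pi_min pi.
Proof.
move=> Hirr; rewrite ler_pdivlMr ?pi_min_pos // mulr_suml.
apply: (@le_trans _ _ (\sum_v pi u * P u v)); last by rewrite -mulr_sumr HP.2 mulr1.
apply: ler_sum => v _; rewrite -Hrev (mulrC (pi v)).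
by apply: ler_wpM2l; [exact: HP.1 | exact: pi_min_le].
Qed.

(* Reversibility turns the pi-weighted column distance at w into the row
   distance from w. *)
Lemma weighted_column_dist t w :
  \sum_u pi u * `|(P ^+ t) u w - pi w| = pi w * dist_pi P pi w t.
Proof.
rewrite /dist_pi mulr_sumr; apply: eq_bigr => u _.
have absorb a (b : rat) : 0 <= a -> a * `|b| = `|a * b|.
  by move=> a0; rewrite normrM ger0_norm.
rewrite (absorb _ _ (Hpi.1 u)) (absorb _ _ (Hpi.1 w)) !mulrBr.
by rewrite (reversible_pow Hrev t u w) (mulrC (pi u)).
Qed.

End StationaryMeasure.

Section Discrepancy.
Variables (N : nat) (P : 'M[rat]_N) (delta : 'I_N -> nat).
Variables (sigma : 'I_N -> nat -> 'I_N) (chi0 : 'I_N -> nat).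
Hypothesis HP : stochastic P.
Hypotheses (Hd : valid_delta P delta) (Hr : valid_rotor P delta sigma).

(* chi t v: tokens at v at time t; flow t v u: tokens sent from v to u at time t. *)
Definition chi t v : rat := (rr_chi sigma chi0 t v)%:R.
Definition flow t v u : rat :=
  (Icount sigma v u (departed sigma chi0 t v) (departed sigma chi0 t.+1 v))%:R.

Lemma flow_out t v : \sum_u flow t v u = chi t v.
Proof. by rewrite /flow -natr_sum Icount_sum departedS addKn. Qed.

Lemma flow_in t u : \sum_v flow t v u = chi t.+1 u.
Proof. by rewrite /chi rr_chiS natr_sum. Qed.

Lemma flow_deviation t v u :
  `|flow t v u - chi t v * P v u| <= (Delta_bar delta)%:R * P v u.
Proof.
apply: (@le_trans _ _ ((delta v)%:R * P v u)).
  by rewrite /flow departedS; exact: Icount_deviation.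
by apply: ler_wpM2r; [exact: HP.1 | rewrite ler_nat; exact: leq_bigmax].
Qed.

(* The discrepancy to the idealised process mu^(T) = chi^(0) P^T is the sum of
   the rounding errors of every step, propagated by the remaining T - t - 1
   steps; since every row of rounding errors sums to zero, any vector pi may
   be subtracted from the propagating kernel. *)
Lemma discrepancy_decomposition (pi : 'I_N -> rat) T w :
  chi T w - rr_mu P chi0 T w = \sum_(t < T) \sum_v \sum_u
    (flow t v u - chi t v * P v u) * ((P ^+ (T - t.+1)) u w - pi w).
Proof.
pose e t := \sum_v chi t v * (P ^+ (T - t)) v w.
have eT : e T = chi T w.
  rewrite /e subnn (bigD1 w) //= pow_entry0 eqxx mulr1 big1 ?addr0 // => v /negbTE.
  by rewrite pow_entry0 => ->; rewrite mulr0.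
have e0 : e 0%N = rr_mu P chi0 T w by rewrite /e subn0.
rewrite -eT -e0 -telescope_sumr // big_mkord; apply: eq_bigr => [[t /= tT]] _.
rewrite /e (_ : (T - t = (T - t.+1).+1)%N); last by lia.
set n := (T - t.+1)%N.
have row_error v : \sum_u (flow t v u - chi t v * P v u) * ((P ^+ n) u w - pi w) =
    \sum_u flow t v u * (P ^+ n) u w - chi t v * (P ^+ n.+1) v w.
  under eq_bigr do rewrite mulrBr.
  rewrite sumrB -mulr_suml sumrB flow_out -mulr_sumr HP.2 mulr1 subrr mul0r subr0.
  under eq_bigr do rewrite mulrBl.
  by rewrite sumrB pow_entryS mulr_sumr; congr (_ - _); apply: eq_bigr => u _; rewrite mulrA.
under [RHS]eq_bigr do rewrite row_error.
rewrite sumrB exchange_big /=; congr (_ - _); apply: eq_bigr => u _.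
by rewrite -mulr_suml flow_in.
Qed.

Variable pi : 'I_N -> rat.
Hypotheses (Hirr : irreducible P) (Hpi : stationary P pi) (Hrev : reversible P pi).

Lemma step_error_le t n w :
  `|\sum_v \sum_u (flow t v u - chi t v * P v u) * ((P ^+ n) u w - pi w)|
    <= (Delta_bar delta)%:R / pi_min pi * (pi w * dist_pi P pi w n).
Proof.
set Dl := (Delta_bar delta)%:R : rat.
apply: le_trans (ler_norm_sum _ _ _) _.
apply: (@le_trans _ _ (\sum_v \sum_u Dl * P v u * `|(P ^+ n) u w - pi w|)).
  apply: ler_sum => v _; apply: le_trans (ler_norm_sum _ _ _) _; apply: ler_sum => u _.
  by rewrite normrM; apply: ler_wpM2r => //; exact: flow_deviation.
rewrite exchange_big /= -weighted_column_dist // mulr_sumr; apply: ler_sum => u _.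
rewrite -mulr_suml -mulr_sumr.
set A := `|_ - _|; have -> : Dl / pi_min pi * (pi u * A) = Dl * (pi u / pi_min pi) * A by ring.
apply: ler_wpM2r; first exact: normr_ge0.
by apply: ler_wpM2l => //; exact: column_sum_le.
Qed.

End Discrepancy.

Unset Implicit Arguments.

Lemma sum_ord_rev (F : nat -> rat) T : \sum_(t < T) F (T - t.+1)%N = \sum_(t < T) F t.
Proof. by rewrite -(big_mkord xpredT F) big_rev_mkord subn0. Qed.

Theorem theorem5p10 (N : nat) (P : 'M[rat]_N) (pi : 'I_N -> rat) (tstar : nat)
  (delta : 'I_N -> nat) (sigma : 'I_N -> nat -> 'I_N) (chi0 : 'I_N -> nat) :
  stochastic P -> ergodic P -> stationary P pi -> reversible P pi ->
  is_mixing_rate P pi tstar ->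
  valid_delta P delta -> valid_rotor P delta sigma ->
  forall (w : 'I_N) (T : nat),
    `| (rr_chi sigma chi0 T w)%:R - rr_mu P chi0 T w |
      <= 3%:R * pi w / pi_min pi * tstar%:R * (Delta_bar delta)%:R.
Proof.
move=> HP Herg Hpi Hrev Hmix Hd Hr w T.
rewrite (discrepancy_decomposition sigma chi0 HP pi T w).
apply: le_trans (ler_norm_sum _ _ _) _.
apply: (@le_trans _ _ (\sum_(t < T) (Delta_bar delta)%:R / pi_min pi *
                              (pi w * dist_pi P pi w (T - t.+1)))).
  by apply: ler_sum => t _; exact: (step_error_le chi0 HP Hd Hr Herg.1 Hpi Hrev).
rewrite -mulr_sumr -mulr_sumr (sum_ord_rev (dist_pi P pi w)).
have c_ge0 : 0 <= (Delta_bar delta)%:R / pi_min pi * pi w.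
  by rewrite mulr_ge0 ?divr_ge0 ?(ltW (pi_min_pos HP Hpi Herg.1)) ?(Hpi.1 w).
rewrite mulrA; apply: le_trans (ler_wpM2l c_ge0 (sum_dist_pi_le w T HP Herg Hpi Hmix)) _.
by rewrite le_eqVlt; apply/orP; left; apply/eqP; ring.
Qed.
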